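(* Let $G=G(m,p,n)$ where $m$ is odd or twice an odd integer, and let $P=P_{(0,\lambda)}$ be the standard parabolic subgroup for a partition $\lambda$ of $n$. Then there is a set $J$ of vectors, each a root of a reflection in $P$, such that $N_G(P)=P\rtimes G_J$, where $G_J$ is the setwise stabiliser of $J$ in $G$.
   Context: Let $m,p,n$ be positive integers with $p\mid m$, let $V=\mathbb{C}^n$ with the standard positive definite Hermitian form and orthonormal basis $e_1,\dots,e_n$, and let $\boldsymbol\mu_m$ be the group of complex $m$th roots of unity. $G(m,p,n)$ is the group of linear maps of $V$ of the form $e_i\mapsto\theta_ie_{\sigma(i)}$ with $\sigma\in\mathrm{Sym}(n)$, $\theta_i\in\boldsymbol\mu_m$ and $(\theta_1\cdots\theta_n)^{m/p}=1$. For a partition $\lambda=(n_1\ge\dots\ge n_d)$ of $n$ put $k_0=0$, $k_i=n_1+\cdots+n_i$ and $\Lambda_i=\{e_j:k_{i-1}<j\le k_i\}$; the standard parabolic subgroup $P_{(0,\lambda)}=\prod_{i=1}^d\mathrm{Sym}(n_i)$, where $\mathrm{Sym}(n_i)$ permutes the vectors of $\Lambda_i$ and fixes the other basis vectors. A root of a reflection $r$ is a non-zero vector orthogonal to the fixed hyperplane of $r$. *)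

(* Elements of G(m,p,n) are represented as n x n matrices over
   algC (algebraic complex numbers) acting on column vectors 'cV_n; the basis
   vector e_(i+1) of the paper is the i-th standard column vector (0-based). *)
From HB Require Import structures.
From mathcomp Require Import all_boot all_order all_algebra all_fingroup all_field.
Unset Printing Implicit Defensive.
Unset Implicit Arguments.
Import Order.TTheory GRing.Theory Num.Theory.
Local Open Scope ring_scope.

Definition monomial_mx (n : nat) (s : 'S_n) (t : 'I_n -> algC) : 'M[algC]_n :=
  \matrix_(j, i) (if j == s i then t i else 0).

Definition Gmpn (m p n : nat) (g : 'M[algC]_n) : Prop :=
  exists (s : 'S_n) (t : 'I_n -> algC),
    (forall i, t i ^+ m = 1) /\ (\prod_i t i) ^+ (m %/ p) = 1 /\
    g = monomial_mx n s t.

Definition is_partition (n : nat) (lam : seq nat) : Prop :=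
  sorted geq lam /\ all (fun k => 0 < k)%N lam /\ sumn lam = n.

Definition psums (lam : seq nat) : seq nat :=
  [seq sumn (take i lam) | i <- iota 1 (size lam)].

(* 0-based j (i.e. e_(j+1)) lies in Lambda_(blk lam j + 1):
   k_(i-1) <= j < k_i  iff  #{i' >= 1 | k_i' <= j} = i - 1 *)
Definition blk (lam : seq nat) (j : nat) : nat := count (fun k => k <= j)%N (psums lam).

Definition Ppar (n : nat) (lam : seq nat) (g : 'M[algC]_n) : Prop :=
  exists s : 'S_n, (forall j, blk lam (s j) = blk lam j) /\
    g = monomial_mx n s (fun _ => 1).

Definition herm (n : nat) (v x : 'cV[algC]_n) : algC := \sum_i (v i 0)^* * x i 0.

(* r is a reflection: its fixed space ker(r - 1) is a hyperplane,
   i.e. rank (r - 1) = 1 *)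
Definition is_reflection (n : nat) (r : 'M[algC]_n) : Prop :=
  \rank (r - 1%:M) = 1%N.

Definition is_root_of (n : nat) (r : 'M[algC]_n) (v : 'cV[algC]_n) : Prop :=
  v != 0 /\ forall x : 'cV[algC]_n, r *m x = x -> herm n v x = 0.

Definition StabGJ (m p n : nat) (J : seq 'cV[algC]_n) (g : 'M[algC]_n) : Prop :=
  Gmpn m p n g /\ forall v : 'cV[algC]_n, (v \in J) = (g *m v \in J).

Definition NormGP (m p n : nat) (lam : seq nat) (g : 'M[algC]_n) : Prop :=
  Gmpn m p n g /\ forall x, Ppar n lam x <-> Ppar n lam (g *m x *m invmx g).

(* A monomial matrix g = (s, t) of G(m,p,n) normalises P exactly when s permutes the
   blocks Lambda_i among themselves and t is constant on each block.  Let k be the odd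
   part of m, so that t_i^k = +-1 for every coefficient t_i, and let J consist of the
   vectors zeta (e_a - e_b) with zeta^k = 1 and a < b in a common block.  Since k is
   odd, (-zeta)^k = -zeta^k, so such a g maps J into itself iff moreover s keeps the
   order of each block where t^k = 1 and reverses it where t^k = -1.  Given g in
   N_G(P), rearranging s inside each block accordingly yields h in G_J with g in P h;
   and an element of P fixing J is a permutation increasing on every block, hence 1. *)

From HB Require Import structures.
From mathcomp Require Import all_boot all_order all_algebra all_fingroup all_field.
From mathcomp Require Import zify ring.
Import Order.TTheory GRing.Theory Num.Theory.
Set Implicit Arguments. Unset Strict Implicit.

Lemma card_ord_pred n (P : pred nat) : #|[set j : 'I_n | P j]| = count P (iota 0 n).
Proof.
rewrite -sum1_card -sum1_count (eq_bigl (fun j : 'I_n => P j)) => [|j]; last by rewrite inE.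
by rewrite -(big_mkord P (fun _ => 1%N)) /index_iota subn0.
Qed.

Lemma count_iota_downclosed (P : pred nat) N j :
  (forall i l, l <= i -> P i -> P l) -> j < N -> P j = (j < count P (iota 0 N)).
Proof.
move=> downP ltjN; rewrite -(subnKC (ltnW ltjN)) iotaD count_cat !add0n.
case Pj: (P j).
  have -> : count P (iota 0 j) = j.
    rewrite -{2}(size_iota 0 j); apply/eqP; rewrite -all_count; apply/allP => i.
    by rewrite mem_iota => /andP [_ ltij]; apply: downP Pj; apply: ltnW.
  by rewrite -(subnSK ltjN) /= Pj; lia.
rewrite (@eq_in_count _ P pred0 (iota j (N - j))) ?count_pred0 => [|i]; last first.
  by rewrite mem_iota => /andP [leji _]; apply/negbTE/negP => /(downP _ _ leji); rewrite Pj.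
by rewrite addn0 ltnNge -{2}(size_iota 0 j) count_size.
Qed.

Lemma ord_homo_ltn_ge n (f : 'I_n -> 'I_n) : {homo f : i j / i < j} -> forall i : 'I_n, i <= f i.
Proof.
move=> f_incr [k ltkn] /=; elim: k ltkn => // k IH ltkn.
exact: leq_ltn_trans (IH (ltnW ltkn)) (f_incr (Ordinal (ltnW ltkn)) (Ordinal ltkn) _).
Qed.

Lemma ord_homo_ltn_id n (f : 'I_n -> 'I_n) : {homo f : i j / i < j} -> f =1 id.
Proof.
move=> f_incr i; apply: val_inj => /=.
have g_incr : {homo (fun j => rev_ord (f (rev_ord j))) : i j / i < j}.
  move=> a b ltab /=; rewrite ltn_sub2lE ?ltn_ord //; apply: f_incr => /=.
  by rewrite ltn_sub2lE ?ltn_ord.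
have := ord_homo_ltn_ge g_incr (rev_ord i); rewrite /= rev_ordK.
have := ord_homo_ltn_ge f_incr i; have := ltn_ord (f i); lia.
Qed.

Section Blocks.
Variables (lam : seq nat) (n : nat).
Local Notation block := (blk lam).

Lemma block_monotone : {homo block : i j / i <= j}.
Proof. by move=> i j leij; apply: sub_count => l /= /leq_trans; apply. Qed.

Definition block_start b := count (fun j => block j < b) (iota 0 n).
Definition block_end b := count (fun j => block j <= b) (iota 0 n).

Lemma block_end_le b : block_end b <= n.
Proof. by rewrite /block_end -{2}(size_iota 0 n) count_size. Qed.

Lemma block_eqE j b : j < n -> (block j == b) = (block_start b <= j < block_end b).
Proof.
move=> ltjn.
have lt_start : (block j < b) = (j < block_start b).
  by apply: count_iota_downclosed ltjn => i l /block_monotone; apply: leq_ltn_trans.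
have le_end : (block j <= b) = (j < block_end b).
  by apply: count_iota_downclosed ltjn => i l /block_monotone; apply: leq_trans.
by rewrite eqn_leq andbC leqNgt lt_start le_end -leqNgt.
Qed.

Lemma block_bounds (i : 'I_n) : block_start (block i) <= i < block_end (block i).
Proof. by rewrite -block_eqE. Qed.

Lemma card_block b : #|[set j : 'I_n | block j == b]| = block_end b - block_start b.
Proof.
rewrite (card_ord_pred n (fun j => block j == b)) /block_end /block_start.
suff -> : count (fun j => block j <= b) (iota 0 n) =
    count (fun j => block j < b) (iota 0 n) + count (fun j => block j == b) (iota 0 n).
  by rewrite addKn.
by elim: (iota 0 n) => //= j s ->; case: ltngtP => _ /=; lia.
Qed.

Definition block_preserving (s : 'S_n) :=
  forall a b : 'I_n, (block (s a) == block (s b)) = (block a == block b).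

Section Realign.
Variables (sg : 'S_n) (rev : 'I_n -> bool).
Hypothesis sg_block : block_preserving sg.
Hypothesis rev_block : forall a b : 'I_n, block a = block b -> rev a = rev b.

Lemma block_size_perm (i : 'I_n) :
  block_end (block (sg i)) - block_start (block (sg i)) =
  block_end (block i) - block_start (block i).
Proof.
rewrite -!card_block -(card_preimset _ (@perm_inj _ sg)); apply: eq_card => j.
by rewrite !inE sg_block.
Qed.

(* [i] keeps its position inside its block (mirrored if [rev i]); the block itself is
   moved to that of [sg i] *)
Definition realign_val (i : 'I_n) : nat := block_start (block (sg i)) +
  (if rev i then block_end (block i) - 1 - i else i - block_start (block i)).

Lemma realign_val_bounds i :
  block_start (block (sg i)) <= realign_val i < block_end (block (sg i)).
Proof.
have := block_size_perm i; have := block_bounds i; have := block_bounds (sg i).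
rewrite /realign_val; case: (rev i); lia.
Qed.

Lemma realign_val_lt i : realign_val i < n.
Proof. by have := realign_val_bounds i; have := block_end_le (block (sg i)); lia. Qed.

Definition realign_fun (i : 'I_n) : 'I_n := Ordinal (realign_val_lt i).

Lemma realign_fun_block i : block (realign_fun i) = block (sg i).
Proof. by apply/eqP; rewrite block_eqE ?realign_val_bounds ?realign_val_lt. Qed.

Lemma realign_fun_inj : injective realign_fun.
Proof.
move=> i j eij.
have eb : block i = block j by apply/eqP; rewrite -sg_block -!realign_fun_block eij.
have esg : block (sg i) = block (sg j) by apply/eqP; rewrite sg_block eb.
move/(congr1 (@nat_of_ord n)): eij; rewrite /= /realign_val (rev_block eb) esg eb.
have := block_bounds i; have := block_bounds j; rewrite eb => hi hj.
by case: (rev j) => e; apply: ord_inj; lia.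
Qed.

Definition realign : 'S_n := perm realign_fun_inj.

Lemma realign_block i : block (realign i) = block (sg i).
Proof. by rewrite permE realign_fun_block. Qed.

Lemma realign_lt (a b : 'I_n) : a < b -> block a = block b ->
  (realign a < realign b) = ~~ rev a.
Proof.
move=> ltab eab; have esg : block (sg a) = block (sg b) by apply/eqP; rewrite sg_block eab.
rewrite !permE /= /realign_val (rev_block eab) esg eab.
have := block_bounds a; have := block_bounds b; rewrite eab => ha hb.
by case: (rev b) => /=; apply/idP/idP => //; lia.
Qed.

End Realign.

Lemma perm_blockwise_increasing_eq1 (pi : 'S_n) : (forall j, block (pi j) = block j) ->
  (forall a b : 'I_n, a < b -> block a = block b -> pi a < pi b) -> pi = 1%g.
Proof.
move=> pi_block pi_incr; apply/permP => i; rewrite perm1; apply: ord_homo_ltn_id i => a b ltab.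
case: (ltngtP (block a) (block b)) => [ltblk | gtblk | eab]; last exact: pi_incr.
  by rewrite ltnNge; apply: contraL ltblk => /block_monotone; rewrite !pi_block -leqNgt.
by move: (block_monotone (ltnW ltab)); rewrite leqNgt gtblk.
Qed.

End Blocks.

Local Open Scope ring_scope.

Lemma inj_stable_mem (T : eqType) (f : T -> T) (s : seq T) :
  injective f -> {homo f : x / x \in s} -> forall x, (x \in s) = (f x \in s).
Proof.
move=> f_inj f_s x; apply/idP/idP => [/f_s // | fxs].
have [_ /(_ (f x))] : (size (map f (undup s)) = size (undup s)) * (map f (undup s) =i undup s).
  apply: uniq_min_size; last by rewrite size_map.
    by rewrite map_inj_uniq ?undup_uniq.
  by move=> w /mapP [y]; rewrite !mem_undup => ys ->; apply: f_s.
by rewrite mem_map // !mem_undup fxs.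
Qed.

Section Monomial.
Variable n : nat.
Implicit Types (s : 'S_n) (t : 'I_n -> algC).

Lemma monomial_mxM s t s' t' :
  monomial_mx n s t *m monomial_mx n s' t' =
  monomial_mx n (s' * s)%g (fun i => t (s' i) * t' i).
Proof.
apply/matrixP => j i; rewrite !mxE (bigD1 (s' i)) //= big1 ?addr0.
  by rewrite !mxE eqxx permM; case: eqP; rewrite ?mul0r.
by move=> k /negPf neq_k; rewrite !mxE neq_k mulr0.
Qed.

Lemma eq_monomial_mx s t t' : t =1 t' -> monomial_mx n s t = monomial_mx n s t'.
Proof. by move=> eq_t; apply/matrixP => j i; rewrite !mxE eq_t. Qed.

Lemma monomial_mx1 : monomial_mx n 1%g (fun=> 1) = 1%:M.
Proof. by apply/matrixP => j i; rewrite !mxE perm1 eq_sym; case: eqP. Qed.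

Lemma monomial_mx_inj s t s' t' : (forall i, t i != 0) ->
  monomial_mx n s t = monomial_mx n s' t' -> s = s' /\ t =1 t'.
Proof.
move=> t_nz /matrixP eq_st.
have e i : s i = s' i /\ t i = t' i.
  have := eq_st (s i) i; rewrite !mxE eqxx.
  by case: eqP => [-> // | _ t0]; move: (t_nz i); rewrite t0 eqxx.
by split => [|i]; [apply/permP => i|]; case: (e i).
Qed.

Lemma mulmx_monomial_inv s t : (forall i, t i != 0) ->
  monomial_mx n s t *m monomial_mx n (s^-1)%g (fun i => (t (s^-1%g i))^-1) = 1%:M.
Proof.
by move=> t_nz; rewrite monomial_mxM -monomial_mx1 mulVg; apply: eq_monomial_mx => i; rewrite divff.
Qed.

Lemma monomial_mx_unit s t : (forall i, t i != 0) -> monomial_mx n s t \in unitmx.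
Proof. by move=> t_nz; case: (mulmx1_unit (mulmx_monomial_inv s t_nz)). Qed.

Lemma invmx_monomial s t : (forall i, t i != 0) ->
  invmx (monomial_mx n s t) = monomial_mx n (s^-1)%g (fun i => (t (s^-1%g i))^-1).
Proof.
move=> t_nz; rewrite -[RHS]mul1mx -(mulVmx (monomial_mx_unit s t_nz)) -mulmxA.
by rewrite mulmx_monomial_inv // mulmx1.
Qed.

Lemma monomial_mx_delta s t a :
  monomial_mx n s t *m delta_mx a 0 = t a *: (delta_mx (s a) 0 : 'cV_n).
Proof.
apply/matrixP => j z; rewrite -colE !mxE ord1 eqxx andbT.
by case: eqP; rewrite ?mulr0 ?mulr1.
Qed.

Lemma monomial_mx_coord s t (x : 'cV[algC]_n) j :
  (monomial_mx n s t *m x) j 0 = t (s^-1%g j) * x (s^-1%g j) 0.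
Proof.
rewrite !mxE (bigD1 (s^-1%g j)) //= big1 ?addr0; first by rewrite !mxE permKV eqxx.
move=> i neq_i; rewrite !mxE; case: eqP => [eq_j|]; last by rewrite mul0r.
by move: neq_i; rewrite eq_j permK eqxx.
Qed.

End Monomial.

Section Normaliser.
Variables (lam : seq nat) (n : nat).
Local Notation block := (blk lam).
Local Notation block_preserving := (block_preserving lam).
Implicit Types (s : 'S_n) (t : 'I_n -> algC).

Definition block_constant t := forall a b : 'I_n, block a = block b -> t a = t b.

Lemma Ppar_tperm (a b : 'I_n) : block a = block b ->
  Ppar n lam (monomial_mx n (tperm a b) (fun=> 1)).
Proof.
by move=> eab; exists (tperm a b); split=> // j; case: tpermP => [->|->|] //; rewrite eab.
Qed.

Lemma conj_monomial_perm s t (pi : 'S_n) : (forall i, t i != 0) ->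
  monomial_mx n s t *m monomial_mx n pi (fun=> 1) *m invmx (monomial_mx n s t) =
  monomial_mx n (s^-1 * (pi * s))%g (fun i => t (pi (s^-1%g i)) / t (s^-1%g i)).
Proof.
move=> t_nz; rewrite invmx_monomial // !monomial_mxM.
by apply: eq_monomial_mx => i; rewrite mulr1.
Qed.

Lemma conj_monomial_Ppar s t x : (forall i, t i != 0) ->
  block_preserving s -> block_constant t -> Ppar n lam x ->
  Ppar n lam (monomial_mx n s t *m x *m invmx (monomial_mx n s t)).
Proof.
move=> t_nz s_block t_block [pi [pi_block ->]]; rewrite conj_monomial_perm //.
exists (s^-1 * (pi * s))%g; split=> [j|].
  by apply/eqP; rewrite !permM -{2}(permKV s j) s_block pi_block.
by apply: eq_monomial_mx => i; rewrite (t_block _ _ (pi_block _)) divff.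
Qed.

Lemma conj_monomial_Ppar_block s t (pi : 'S_n) : (forall i, t i != 0) ->
  Ppar n lam (monomial_mx n s t *m monomial_mx n pi (fun=> 1) *m invmx (monomial_mx n s t)) ->
  forall j, block (s (pi j)) = block (s j) /\ t (pi j) = t j.
Proof.
move=> t_nz [rho [rho_block]]; rewrite conj_monomial_perm //.
case/monomial_mx_inj=> [i|e_rho eq_t j]; first by rewrite mulf_neq0 ?invr_eq0.
split; first by rewrite -(rho_block (s j)) -e_rho !permM permK.
by apply: divr1_eq; rewrite -(eq_t (s j)) permK.
Qed.

Lemma normalises_Ppar_monomial s t : (forall i, t i != 0) ->
  (forall x, Ppar n lam x <-> Ppar n lam (monomial_mx n s t *m x *m invmx (monomial_mx n s t)))
  <-> block_preserving s /\ block_constant t.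
Proof.
move=> t_nz; set g := monomial_mx n s t.
pose g' := monomial_mx n (s^-1)%g (fun i => (t (s^-1%g i))^-1).
have t'_nz i : (t (s^-1%g i))^-1 != 0 by rewrite invr_eq0.
have g_unit : g \in unitmx := monomial_mx_unit s t_nz.
have gV : invmx g = g' by rewrite invmx_monomial.
have g'V : invmx g' = g by rewrite -gV invmxK.
have conjK x : g' *m (g *m x *m invmx g) *m invmx g' = x.
  by rewrite g'V -gV !mulmxA mulVmx // mul1mx mulmxKV.
have conjVK x : g *m (g' *m x *m invmx g') *m invmx g = x.
  by rewrite -gV invmxK !mulmxA mulmxV // mul1mx mulmxK.
split=> [normal | [s_block t_block] x].
  have fwd (a b : 'I_n) : block a = block b -> block (s a) = block (s b) /\ t a = t b.
    move=> /Ppar_tperm /normal /(conj_monomial_Ppar_block t_nz) /(_ a).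
    by rewrite tpermL => -[-> ->].
  split=> [a b|a b /fwd [] //]; apply/eqP/eqP => [esab|/fwd [] //].
  have /(conj_monomial_Ppar_block t'_nz) : Ppar n lam
      (g' *m monomial_mx n (tperm (s a) (s b)) (fun=> 1) *m invmx g').
    by apply/normal; rewrite conjVK; apply: Ppar_tperm.
  by move=> /(_ (s a)) []; rewrite tpermL !permK.
split=> [|/(conj_monomial_Ppar (s := (s^-1)%g) t'_nz _ _)]; first exact: conj_monomial_Ppar.
rewrite conjK; apply=> [a b | a b eab].
  by rewrite -[LHS]s_block !permKV.
by congr (_^-1); apply/t_block/eqP; rewrite -s_block !permKV eab.
Qed.

End Normaliser.

Section Transpositions.
Variable n : nat.
Implicit Types (a b c d : 'I_n).

Lemma is_reflection_tperm a b : a != b ->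
  is_reflection n (monomial_mx n (tperm a b) (fun=> 1)).
Proof.
move=> neq_ab; set r := monomial_mx n _ _; pose u : 'cV[algC]_n := delta_mx a 0 - delta_mx b 0.
have r_sub1 : r - 1%:M = - (u *m u^T).
  apply/matrixP => j i; rewrite !mxE big_ord1 !mxE !eqxx !andbT.
  have neq_ba : (b == a) = false by rewrite eq_sym (negPf neq_ab).
  case: tpermP => [->|->|/eqP neq_ia /eqP neq_ib]; rewrite ?eqxx ?neq_ba ?(negPf neq_ab).
  - by case: (j == a); case: (j == b); rewrite /=; ring.
  - by case: (j == a); case: (j == b); rewrite /=; ring.
  - by rewrite (negPf neq_ia) (negPf neq_ib) /=; case: (j == i); rewrite /=; ring.
apply/eqP; rewrite eqn_leq r_sub1 mxrank_opp lt0n mxrank_eq0.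
rewrite (leq_trans (mxrankM_maxl _ _) (rank_leq_col _)) /=.
apply: contraTneq isT => /matrixP /(_ a a); rewrite !mxE big_ord1 !mxE !eqxx andbT.
by rewrite (negPf neq_ab) subr0 mulr1 => /eqP; rewrite oner_eq0.
Qed.

Lemma is_root_tperm a b (ze : algC) : a != b -> ze != 0 ->
  is_root_of n (monomial_mx n (tperm a b) (fun=> 1)) (ze *: (delta_mx a 0 - delta_mx b 0)).
Proof.
move=> neq_ab ze_nz; split=> [|x fix_x].
  apply: contraNneq ze_nz => /matrixP /(_ a 0); rewrite !mxE !eqxx (negPf neq_ab).
  by rewrite subr0 mulr1 => ->.
have xa_xb : x a 0 = x b 0 by rewrite -{2}fix_x monomial_mx_coord tpermV tpermR mul1r.
rewrite /herm (bigD1 a) //= (bigD1 b) 1?eq_sym //= big1 ?addr0.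
  rewrite !mxE !eqxx (negPf neq_ab) eq_sym (negPf neq_ab) xa_xb subr0 sub0r mulr1 mulrN1.
  by rewrite rmorphN mulNr addrN.
move=> i /andP [neq_ia neq_ib]; rewrite !mxE (negPf neq_ia) (negPf neq_ib) subrr mulr0.
by rewrite conjC0 mul0r.
Qed.

End Transpositions.

Lemma scaled_delta_sub_eq n (al be ze : algC) (a b c d : 'I_n) :
  a != b -> c != d -> al != 0 -> ze != 0 ->
  al *: delta_mx a 0 - be *: delta_mx b 0 = ze *: (delta_mx c 0 - delta_mx d 0 : 'cV[algC]_n) ->
  [/\ a = c, b = d, al = ze & be = ze] \/ [/\ a = d, b = c, al = - ze & be = - ze].
Proof.
move=> neq_ab neq_cd al_nz ze_nz /matrixP eq_v.
have coord x : al * (x == a)%:R - be * (x == b)%:R = ze * ((x == c)%:R - (x == d)%:R).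
  by have := eq_v x 0; rewrite !mxE !eqxx !andbT.
have first_eq c' d' (z' : algC) : c' != d' -> z' != 0 -> a = c' ->
    (forall x, al * (x == a)%:R - be * (x == b)%:R = z' * ((x == c')%:R - (x == d')%:R)) ->
    [/\ b = d', al = z' & be = z'].
  move=> neq_cd' z'_nz eq_ac' coord'; subst c'.
  have neq_da : (d' == a) = false by rewrite eq_sym (negPf neq_cd').
  have := coord' a; rewrite eqxx (negPf neq_ab) (negPf neq_cd') mulr1 mulr0 !subr0 mulr1 => ->.
  have := coord' d'; rewrite eqxx neq_da mulr0 !sub0r mulrN1.
  case: (eqVneq d' b) => [<- | _]; first by rewrite mulr1 => /oppr_inj.
  by rewrite mulr0 oppr0 => /esym /eqP; rewrite oppr_eq0 (negPf z'_nz).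
have := coord a; rewrite eqxx (negPf neq_ab) mulr1 mulr0 subr0.
case: (eqVneq a c) => [eq_ac _ | neq_ac].
  by left; have [] := first_eq c d ze neq_cd ze_nz eq_ac coord.
case: (eqVneq a d) => [eq_ad _ | neq_ad]; last first.
  by rewrite subrr mulr0 => /eqP; rewrite (negPf al_nz).
right; have [] // := first_eq d c (- ze) _ _ eq_ad.
- by rewrite eq_sym.
- by rewrite oppr_eq0.
- by move=> x; rewrite coord mulNr -mulrN opprB.
Qed.

Lemma expr_sign_neq0 (R : nzRingType) (x : R) k : (0 < k)%N ->
  x ^+ k = 1 \/ x ^+ k = -1 -> x != 0.
Proof.
move=> k_gt0 xk; apply/eqP => x0; move: xk; rewrite x0 expr0n gtn_eqF //=.
by case=> /esym /eqP; rewrite ?oppr_eq0 oner_eq0.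
Qed.

Section RootSet.
Variables (n : nat) (lam : seq nat) (k : nat) (z : algC).
Hypotheses (k_odd : odd k) (z_prim : k.-primitive_root z).
Local Notation block := (blk lam).
Implicit Types (s : 'S_n) (t : 'I_n -> algC).

Definition root_set : seq 'cV[algC]_n :=
  [seq z ^+ q.1 *: (delta_mx q.2.1 0 - delta_mx q.2.2 0) |
    q : 'I_k * ('I_n * 'I_n) <- enum [pred q : 'I_k * ('I_n * 'I_n) |
      (q.2.1 < q.2.2)%N && (block q.2.1 == block q.2.2)]].

Lemma mem_root_set v : v \in root_set <-> exists (ze : algC) (a b : 'I_n),
  [/\ ze ^+ k = 1, (a < b)%N, block a = block b & v = ze *: (delta_mx a 0 - delta_mx b 0)].
Proof.
split=> [/mapP [[i [a b]]] | [ze [a [b [zek ltab eab ->]]]]].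
  rewrite mem_enum inE /= => /andP [ltab /eqP eab] ->; exists (z ^+ i), a, b.
  by rewrite exprAC (prim_expr_order z_prim) expr1n.
have [i ->] := prim_rootP z_prim zek.
by apply/mapP; exists (i, (a, b)); rewrite // mem_enum inE /= ltab eab eqxx.
Qed.

Lemma unity_root_neq0 (ze : algC) : ze ^+ k = 1 -> ze != 0.
Proof. by move=> zek; apply: (expr_sign_neq0 (prim_order_gt0 z_prim) (or_introl zek)). Qed.

Lemma root_set_reflection v : v \in root_set ->
  exists r, Ppar n lam r /\ is_reflection n r /\ is_root_of n r v.
Proof.
move=> /mem_root_set [ze [a [b [zek ltab eab ->]]]]; have neq_ab : a != b := negbT (ltn_eqF ltab).
exists (monomial_mx n (tperm a b) (fun=> 1)); split; first exact: Ppar_tperm.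
by split; [apply: is_reflection_tperm | apply: is_root_tperm; rewrite ?unity_root_neq0].
Qed.

(* characterises the monomial matrices mapping [root_set] into itself *)
Definition root_compatible s t := forall a b : 'I_n, (a < b)%N -> block a = block b ->
  [/\ block (s a) = block (s b), t a = t b & (s a < s b)%N = (t a ^+ k == 1)].

Lemma root_compatible_block s t (a b : 'I_n) : root_compatible s t -> block a = block b ->
  block (s a) = block (s b) /\ t a = t b.
Proof.
move=> compat eab; case: (ltngtP a b) => [ltab | ltba | /val_inj -> //].
  by have [] := compat a b ltab eab.
by have [] := compat b a ltba (esym eab).
Qed.

Lemma monomial_mx_root s t (ze : algC) (a b : 'I_n) :
  monomial_mx n s t *m (ze *: (delta_mx a 0 - delta_mx b 0)) =
  (ze * t a) *: delta_mx (s a) 0 - (ze * t b) *: (delta_mx (s b) 0 : 'cV_n).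
Proof. by rewrite -scalemxAr mulmxBr !monomial_mx_delta scalerBr !scalerA. Qed.

Lemma root_compatible_stable s t : (forall i, t i ^+ k = 1 \/ t i ^+ k = -1) ->
  root_compatible s t -> {homo mulmx (monomial_mx n s t) : v / v \in root_set}.
Proof.
move=> t_sign compat v /mem_root_set [ze [a [b [zek ltab eab ->]]]]; apply/mem_root_set.
rewrite monomial_mx_root; have [esab <- ord_sab] := compat a b ltab eab.
case: (t_sign a) => tak; rewrite tak ?eqxx ?eqNr ?oner_eq0 in ord_sab.
  exists (ze * t a), (s a), (s b).
  by rewrite exprMn zek tak mulr1 -scalerBr.
exists (- (ze * t a)), (s b), (s a); split=> //.
- by rewrite exprNn exprMn zek tak -signr_odd k_odd mulN1r mul1r opprK.
- rewrite ltn_neqAle leqNgt ord_sab andbT.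
  by apply: contraTneq ltab => /val_inj /perm_inj ->; rewrite ltnn.
- by rewrite scaleNr -scalerN opprB scalerBr.
Qed.

Lemma stable_root_compatible s t : (forall i, t i != 0) ->
  {homo mulmx (monomial_mx n s t) : v / v \in root_set} -> root_compatible s t.
Proof.
move=> t_nz stable a b ltab eab.
have : 1 *: (delta_mx a 0 - delta_mx b 0) \in root_set.
  by apply/mem_root_set; exists 1, a, b; rewrite expr1n.
move=> /stable; rewrite monomial_mx_root !mul1r.
move=> /mem_root_set [ze [c [d [zek ltcd ecd eq_v]]]].
have neq_sab : s a != s b by rewrite (inj_eq perm_inj); apply: negbT (ltn_eqF ltab).
have [] := scaled_delta_sub_eq neq_sab (negbT (ltn_eqF ltcd)) (t_nz a) (unity_root_neq0 zek) eq_v.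
  by case=> -> -> -> ->; rewrite ltcd zek eqxx.
case=> -> -> -> ->; split=> //.
by rewrite ltnNge ltnW // exprNn zek -signr_odd k_odd mulr1 eqNr oner_eq0.
Qed.

Lemma stabiliser_block_structure s t : (forall i, t i != 0) ->
  (forall v, (v \in root_set) = (monomial_mx n s t *m v \in root_set)) ->
  block_preserving lam s /\ block_constant lam t.
Proof.
move=> t_nz stab.
have compat : root_compatible s t by apply: stable_root_compatible => // v; rewrite stab.
have t'_nz i : (t (s^-1%g i))^-1 != 0 by rewrite invr_eq0.
have compat' : root_compatible (s^-1)%g (fun i => (t (s^-1%g i))^-1).
  apply: stable_root_compatible => // v.
  by move=> vJ; rewrite stab mulmxA mulmx_monomial_inv // mul1mx.
split=> [a b | a b /(root_compatible_block compat) [] //].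
apply/eqP/eqP => [esab | /(root_compatible_block compat) [] //].
by have [] := root_compatible_block compat' esab; rewrite !permK.
Qed.

Lemma exists_root_compatible_realign (sg : 'S_n) t :
  block_preserving lam sg -> block_constant lam t ->
  exists tau : 'S_n, root_compatible tau t /\ forall i, block (tau i) = block (sg i).
Proof.
move=> sg_block t_block.
have rev_block : forall a b : 'I_n, block a = block b -> (t a ^+ k != 1) = (t b ^+ k != 1).
  by move=> a b /t_block ->.
exists (realign sg_block rev_block); split=> [a b ltab eab|]; last exact: realign_block.
split; [by rewrite !realign_block; apply/eqP; rewrite sg_block eab | exact: t_block |].
by rewrite realign_lt // negbK.
Qed.

End RootSet.

Section Factorisation.
Variables (m p n : nat) (lam : seq nat) (k : nat) (z : algC).
Hypotheses (k_odd : odd k) (z_prim : k.-primitive_root z).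
Hypothesis root_sign : forall th : algC, th ^+ m = 1 -> th ^+ k = 1 \/ th ^+ k = -1.
Local Notation J := (root_set n lam k z).

Lemma Gmpn_coef_neq0 (t : 'I_n -> algC) : (forall i, t i ^+ m = 1) -> forall i, t i != 0.
Proof. by move=> t_m i; apply: (expr_sign_neq0 (odd_gt0 k_odd)); apply: root_sign. Qed.

Lemma normaliser_factor g : NormGP m p n lam g ->
  exists x h, Ppar n lam x /\ StabGJ m p n J h /\ g = x *m h.
Proof.
case=> -[sg [t [t_m [t_prod ->]]]] normal; have t_nz := Gmpn_coef_neq0 t_m.
have [sg_block t_block] := (normalises_Ppar_monomial lam sg t_nz).1 normal.
have [tau [compat tau_block]] := exists_root_compatible_realign k sg_block t_block.
exists (monomial_mx n (tau^-1 * sg)%g (fun=> 1)), (monomial_mx n tau t); split; [|split].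
- by exists (tau^-1 * sg)%g; split=> // j; rewrite permM -tau_block permKV.
- split; first by exists tau, t.
  apply: inj_stable_mem; first exact/can_inj/mulKmx/monomial_mx_unit.
  by apply: root_compatible_stable compat => // i; apply: root_sign.
- by rewrite monomial_mxM mulKVg; apply: eq_monomial_mx => i; rewrite mul1r.
Qed.

Lemma Ppar_mul_stab_normaliser x h : Ppar n lam x -> StabGJ m p n J h ->
  NormGP m p n lam (x *m h).
Proof.
move=> [pi [pi_block ->]] [[tau [t [t_m [t_prod ->]]]] stab].
have t_nz := Gmpn_coef_neq0 t_m.
have [tau_block t_block] := stabiliser_block_structure k_odd z_prim t_nz stab.
have -> : monomial_mx n pi (fun=> 1) *m monomial_mx n tau t = monomial_mx n (tau * pi)%g t.
  by rewrite monomial_mxM; apply: eq_monomial_mx => i; rewrite mul1r.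
split; first by exists (tau * pi)%g, t.
apply/normalises_Ppar_monomial => //; split=> // a b.
by rewrite !permM !pi_block tau_block.
Qed.

Lemma Ppar_stab_eq1 g : Ppar n lam g -> StabGJ m p n J g -> g = 1%:M.
Proof.
move=> [pi [pi_block ->]] [_ stab].
have compat : root_compatible lam k pi (fun=> 1).
  by apply: (stable_root_compatible k_odd z_prim) => [i|v]; rewrite ?oner_neq0 // stab.
suff -> : pi = 1%g by apply: monomial_mx1.
apply: (perm_blockwise_increasing_eq1 pi_block) => a b ltab eab.
by have [_ _ ->] := compat a b ltab eab; rewrite expr1n.
Qed.

End Factorisation.

Lemma odd_part_sign m : (odd m \/ exists k, odd k /\ m = (2 * k)%N) ->
  exists k, odd k /\ forall th : algC, th ^+ m = 1 -> th ^+ k = 1 \/ th ^+ k = -1.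
Proof.
case=> [m_odd | [k [k_odd ->]]]; first by exists m; split=> // th ->; left.
exists k; split=> // th; rewrite mulnC exprM => /eqP.
by rewrite sqrf_eq1 => /orP [] /eqP; [left | right].
Qed.

Theorem corollary4 (m p n : nat) (lam : seq nat) :
  (0 < m)%N -> (0 < p)%N -> (0 < n)%N -> (p %| m)%N ->
  (odd m \/ exists k, odd k /\ m = (2 * k)%N) ->
  is_partition n lam ->
  exists J : seq 'cV[algC]_n,
    (forall v, v \in J ->
       exists r, Ppar n lam r /\ is_reflection n r /\ is_root_of n r v) /\
    (forall g, NormGP m p n lam g <->
       exists x h, Ppar n lam x /\ StabGJ m p n J h /\ g = x *m h) /\
    (forall g, Ppar n lam g -> StabGJ m p n J g -> g = 1%:M).
Proof.
move=> _ _ _ _ /odd_part_sign [k [k_odd root_sign]] _.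
have [z z_prim] := C_prim_root_exists (odd_gt0 k_odd).
exists (root_set n lam k z); split; [exact: root_set_reflection | split].
- move=> g; split; first exact: normaliser_factor.
  by case=> [x [h [Px [Sh ->]]]]; apply: (Ppar_mul_stab_normaliser k_odd z_prim root_sign).
- exact: Ppar_stab_eq1.
Qed.
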